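(* Let $(\mathfrak J,B)$ be a nilpotent pseudo-euclidean Jordan algebra with $\mathfrak J\notin\mathcal E$, where $\mathcal E$ consists of $\{0\}$ and the one-dimensional Jordan algebra with zero product. Then $\mathfrak J$ is obtained (up to isomorphism) from finitely many elements $\mathfrak J_1,\dots,\mathfrak J_n$ of $\mathcal E$ by a finite sequence of orthogonal direct sums of pseudo-euclidean Jordan algebras and/or generalized double extensions by the one-dimensional Jordan algebra with zero product.
   Context: All algebras are finite-dimensional over a field $\mathbb K$ of characteristic zero. A Jordan algebra is a commutative algebra with $x(yx^2)=(xy)x^2$; $(\mathfrak J,B)$ is pseudo-euclidean if $B$ is a nondegenerate symmetric bilinear form with $B(xy,z)=B(x,yz)$. The orthogonal direct sum of pseudo-euclidean algebras is the product algebra with the direct sum of the forms. Associator $(x,y,z)=(xy)z-x(yz)$. Admissible pair of a Jordan algebra $\mathfrak J_1$: $(D,x_0)\in\mathrm{End}(\mathfrak J_1)\times\mathfrak J_1$ with, for all $x,y$: $D(x^2y)=x^2D(y)+2D(x)(xy)-2x(D(x)y)$; $D(x)D(y)-D(D(x)y)=\tfrac12(x_0,y,x)$; $D(x_0x)=x_0D(x)$; $xD(x^2)=x^2D(x)$; $D^2(x^2)=2(D(x))^2-2xD^2(x)+x_0x^2$; $D^3(x)=\tfrac32x_0D(x)-\tfrac12xD(x_0)$; $D^2(x_0)=x_0^2$. Generalized double extension of a pseudo-euclidean $(\mathfrak J_1,B_1)$ by the one-dimensional algebra with zero product via such a pair with $D$ $B_1$-symmetric and $k\in\mathbb K$: $\mathbb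 Ka\oplus\mathfrak J_1\oplus\mathbb Kb$ with product $b\star\cdot=\cdot\star b=0$, $a\star a=x_0+kb$, $x\star y=xy+B_1(Dx,y)b$, $a\star x=x\star a=D(x)+B_1(x_0,x)b$ ($x,y\in\mathfrak J_1$), and scalar product extending $B_1$ with $B(a,b)=1$, $B(a,a)=B(b,b)=0$, $a,b\perp\mathfrak J_1$. *)

From HB Require Import structures.
From mathcomp Require Import all_boot all_order all_algebra.
Set Implicit Arguments. Unset Strict Implicit. Unset Printing Implicit Defensive.
Import GRing.Theory.
Local Open Scope ring_scope.

Record falg (K : fieldType) (n : nat) := FAlg {
  amul : 'rV[K]_n -> 'rV[K]_n -> 'rV[K]_n ;
  aform : 'rV[K]_n -> 'rV[K]_n -> K }.

Section Defs.
Variable K : fieldType.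

Definition bilinear_mul n (m : 'rV[K]_n -> 'rV[K]_n -> 'rV[K]_n) :=
  (forall a x y z, m (a *: x + y) z = a *: m x z + m y z) /\
  (forall a x y z, m z (a *: x + y) = a *: m z x + m z y).

Definition bilinear_form n (B : 'rV[K]_n -> 'rV[K]_n -> K) :=
  (forall a x y z, B (a *: x + y) z = a * B x z + B y z) /\
  (forall a x y z, B z (a *: x + y) = a * B z x + B z y).

Definition is_jordan n (A : falg K n) :=
  let m := amul A in
  bilinear_mul m /\ (forall x y, m x y = m y x) /\
  (forall x y, m x (m y (m x x)) = m (m x y) (m x x)).

Definition is_pseudo_euclidean n (A : falg K n) :=
  let B := aform A in let m := amul A in
  bilinear_form B /\ (forall x y, B x y = B y x) /\
  (forall x, (forall y, B x y = 0) -> x = 0) /\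
  (forall x y z, B (m x y) z = B x (m y z)).

Definition is_pE_jordan n (A : falg K n) := is_jordan A /\ is_pseudo_euclidean A.

Inductive prod_deg n (A : falg K n) : nat -> 'rV[K]_n -> Prop :=
| prod_deg1 x : prod_deg A 1 x
| prod_degM i j x y : prod_deg A i x -> prod_deg A j y ->
    prod_deg A (i + j)%N (amul A x y).

(* nilpotent: J^k = 0 for some k >= 1, J^k being spanned by the products of degree k *)
Definition nilpotent_alg n (A : falg K n) :=
  exists k, (0 < k)%N /\ forall x, prod_deg A k x -> x = 0.

Definition in_E n (A : falg K n) :=
  n = 0%N \/ (n = 1%N /\ forall x y, amul A x y = 0).

Definition osum n1 n2 (A1 : falg K n1) (A2 : falg K n2) : falg K (n1 + n2) :=
  FAlg (fun z w => row_mx (amul A1 (lsubmx z) (lsubmx w)) (amul A2 (rsubmx z) (rsubmx w)))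
       (fun z w => aform A1 (lsubmx z) (lsubmx w) + aform A2 (rsubmx z) (rsubmx w)).

Definition assoc n (A : falg K n) x y z :=
  amul A (amul A x y) z - amul A x (amul A y z).

Definition admissible n (A : falg K n) (D : 'M[K]_n) (x0 : 'rV[K]_n) :=
  let m := amul A in let Df := fun x => x *m D in
  let sq := fun x => m x x in
  (forall x y, Df (m (sq x) y) = m (sq x) (Df y) + 2%:R *: m (Df x) (m x y)
                                     - 2%:R *: m x (m (Df x) y)) /\
  (forall x y, m (Df x) (Df y) - Df (m (Df x) y) = 2%:R^-1 *: assoc A x0 y x) /\
  (forall x, Df (m x0 x) = m x0 (Df x)) /\
  (forall x, m x (Df (sq x)) = m (sq x) (Df x)) /\
  (forall x, Df (Df (sq x)) = 2%:R *: sq (Df x) - 2%:R *: m x (Df (Df x)) + m x0 (sq x)) /\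
  (forall x, Df (Df (Df x)) = (3%:R / 2%:R) *: m x0 (Df x) - 2%:R^-1 *: m x (Df x0)) /\
  Df (Df x0) = sq x0.

Definition form_symmetric n (A : falg K n) (D : 'M[K]_n) :=
  forall x y, aform A (x *m D) y = aform A x (y *m D).

(* Generalized double extension  K a (+) J1 (+) K b, carried by 'rV_(1 + (n + 1)):
   an element z is  (coef_a z) a + (mid z) + (coef_b z) b. *)
Definition coef_a n (z : 'rV[K]_(1 + (n + 1))) : K := lsubmx z 0 0.
Definition mid n (z : 'rV[K]_(1 + (n + 1))) : 'rV[K]_n := lsubmx (rsubmx z).
Definition coef_b n (z : 'rV[K]_(1 + (n + 1))) : K := rsubmx (rsubmx z) 0 0.
Definition mk3 n (al : K) (x : 'rV[K]_n) (be : K) : 'rV[K]_(1 + (n + 1)) :=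
  row_mx (al%:M) (row_mx x (be%:M)).

Definition dext n (A : falg K n) (D : 'M[K]_n) (x0 : 'rV[K]_n) (k : K)
  : falg K (1 + (n + 1)) :=
  FAlg (fun z w =>
         let al := coef_a z in let x := mid z in
         let al' := coef_a w in let x' := mid w in
         mk3 0
           ((al * al') *: x0 + al *: (x' *m D) + al' *: (x *m D) + amul A x x')
           (al * al' * k + al * aform A x0 x' + al' * aform A x0 x
              + aform A (x *m D) x'))
       (fun z w => coef_a z * coef_b w + coef_b z * coef_a w
                   + aform A (mid z) (mid w)).

Inductive obtained : forall n, falg K n -> Prop :=
| obt_base n (A : falg K n) : in_E A -> is_pE_jordan A -> obtained A
| obt_osum n1 n2 (A1 : falg K n1) (A2 : falg K n2) :
    obtained A1 -> obtained A2 -> obtained (osum A1 A2)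
| obt_dext n (A : falg K n) (D : 'M[K]_n) (x0 : 'rV[K]_n) (k : K) :
    obtained A -> admissible A D x0 -> form_symmetric A D ->
    obtained (dext A D x0 k).

Definition isometric_iso n1 n2 (A1 : falg K n1) (A2 : falg K n2) :=
  exists f : {linear 'rV[K]_n1 -> 'rV[K]_n2},
    bijective f /\ (forall x y, f (amul A1 x y) = amul A2 (f x) (f y)) /\
    (forall x y, aform A2 (f x) (f y) = aform A1 x y).

End Defs.

(* Induction on the dimension.  A nonzero nilpotent J has an element c <> 0 with
   c J = 0, and invariance of B gives B(x y, c) = B(x, y c) = 0.  If B(c, c) <> 0, then J
   is the orthogonal sum of the line K c, which lies in E, and of c^perp, a smaller
   nilpotent pseudo-euclidean Jordan algebra.  If B(c, c) = 0, pick a with B(c, a) = 1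
   and B(a, a) = 0; then J is the generalized double extension of W = {a, c}^perp with
   D x = proj_W(a x), x0 = proj_W(a a) and k = B(a a, a), the vectors a and c playing
   the roles of the adjoined a and b.  That (D, x0) is admissible comes from the
   Jordan identity of the double extension at t a + x: in characteristic zero each
   coefficient of the cubic polynomial in t vanishes separately, and these
   coefficients are exactly the defining identities. *)

From Stdlib Require Import Classical.
From mathcomp Require Import all_boot all_order all_algebra.
From mathcomp Require Import ring.
Set Implicit Arguments. Unset Strict Implicit. Unset Printing Implicit Defensive.
Import GRing.Theory.
Local Open Scope ring_scope.

Section LinearFun.
Variables (K : fieldType) (U V : lmodType K).
Implicit Types f : U -> V.

Lemma linear_fun0 f : linear f -> f 0 = 0.
Proof. by move=> Hf; have := Hf (-1) 0 0; rewrite scaler0 addr0 scaleN1r addNr. Qed.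

Lemma linear_funD f : linear f -> forall x y, f (x + y) = f x + f y.
Proof. by move=> Hf x y; have := Hf 1 x y; rewrite !scale1r. Qed.

Lemma linear_funZ f : linear f -> forall a x, f (a *: x) = a *: f x.
Proof. by move=> Hf a x; have := Hf a x 0; rewrite !addr0 (linear_fun0 Hf) addr0. Qed.

Lemma can_linear f (g : V -> U) : linear f -> cancel f g -> cancel g f -> linear g.
Proof. by move=> Hf fg gf a x y; apply: (can_inj fg); rewrite Hf !gf. Qed.

End LinearFun.

Section Preliminaries.
Variable K : fieldType.
Local Notation rV n := 'rV[K]_n.

Lemma mul_rV_lin1_fun m n (f : rV m -> rV n) : linear f -> forall u, u *m lin1_mx f = f u.
Proof.
move=> Hf u.
rewrite [u in RHS]row_sum_delta (big_morph f (linear_funD Hf) (linear_fun0 Hf)).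
apply/rowP=> i; rewrite mxE summxE; apply: eq_bigr => j _.
by rewrite (linear_funZ Hf) !mxE.
Qed.

Section BilinearMul.
Variables (n : nat) (m : rV n -> rV n -> rV n).
Hypothesis Hm : bilinear_mul m.

Let linear_mull z : linear (m^~ z). Proof. by move=> a x y; exact: (proj1 Hm). Qed.
Let linear_mulr z : linear (m z). Proof. by move=> a x y; exact: (proj2 Hm). Qed.

Lemma bmul0l z : m 0 z = 0. Proof. exact: linear_fun0 (linear_mull z). Qed.
Lemma bmul0r z : m z 0 = 0. Proof. exact: linear_fun0 (linear_mulr z). Qed.
Lemma bmulDl x y z : m (x + y) z = m x z + m y z.
Proof. exact: linear_funD (linear_mull z) x y. Qed.
Lemma bmulDr x y z : m z (x + y) = m z x + m z y.
Proof. exact: linear_funD (linear_mulr z) x y. Qed.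
Lemma bmulZl a x z : m (a *: x) z = a *: m x z.
Proof. exact: linear_funZ (linear_mull z) a x. Qed.
Lemma bmulZr a x z : m z (a *: x) = a *: m z x.
Proof. exact: linear_funZ (linear_mulr z) a x. Qed.

End BilinearMul.

Section BilinearForm.
Variables (n : nat) (B : rV n -> rV n -> K).
Hypothesis HB : bilinear_form B.

Lemma bform0l z : B 0 z = 0.
Proof. by have := proj1 HB (-1) 0 0 z; rewrite scaler0 addr0 mulN1r addNr. Qed.
Lemma bform0r z : B z 0 = 0.
Proof. by have := proj2 HB (-1) 0 0 z; rewrite scaler0 addr0 mulN1r addNr. Qed.
Lemma bformDl x y z : B (x + y) z = B x z + B y z.
Proof. by have := proj1 HB 1 x y z; rewrite scale1r mul1r. Qed.
Lemma bformDr x y z : B z (x + y) = B z x + B z y.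
Proof. by have := proj2 HB 1 x y z; rewrite scale1r mul1r. Qed.
Lemma bformZl a x z : B (a *: x) z = a * B x z.
Proof. by rewrite -[a *: x]addr0 (proj1 HB) bform0l addr0. Qed.
Lemma bformZr a x z : B z (a *: x) = a * B z x.
Proof. by rewrite -[a *: x]addr0 (proj2 HB) bform0r addr0. Qed.
Lemma bformNl x z : B (- x) z = - B x z.
Proof. by rewrite -scaleN1r bformZl mulN1r. Qed.
Lemma bformNr x z : B z (- x) = - B z x.
Proof. by rewrite -scaleN1r bformZr mulN1r. Qed.

End BilinearForm.

Lemma entryD n (u v : rV n) j : (u + v) 0 j = u 0 j + v 0 j. Proof. by rewrite mxE. Qed.
Lemma entryZ n a (u : rV n) j : (a *: u) 0 j = a * u 0 j. Proof. by rewrite mxE. Qed.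
Lemma entryN n (u : rV n) j : (- u) 0 j = - u 0 j. Proof. by rewrite mxE. Qed.
Lemma entry0 n j : (0 : rV n) 0 j = 0. Proof. by rewrite mxE. Qed.

Lemma mulmxZl m p a (u : rV m) (M : 'M[K]_(m, p)) : (a *: u) *m M = a *: (u *m M).
Proof. by rewrite scalemxAl. Qed.

Lemma eq_from_scaled_eq (l a b c d : K) : c = d -> a - b = l * (c - d) -> a = b.
Proof. by move=> -> /eqP; rewrite subrr mulr0 subr_eq0 => /eqP. Qed.

Lemma cubic_coefs_eq0 (Hch : [pchar K] =i pred0) n (c0 c1 c2 c3 : rV n) :
  (forall t : K, c0 + t *: c1 + t ^+ 2 *: c2 + t ^+ 3 *: c3 = 0) ->
  [/\ c0 = 0, c1 = 0, c2 = 0 & c3 = 0].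
Proof.
move=> H.
have n2 : (2%:R : K) != 0 by rewrite ((pcharf0P K).1 Hch 2).
have n6 : (6%:R : K) != 0 by rewrite ((pcharf0P K).1 Hch 6).
suff hc j : [/\ c0 0 j = 0, c1 0 j = 0, c2 0 j = 0 & c3 0 j = 0].
  by split; apply/rowP=> j; rewrite mxE; case: (hc j).
pose L t := c0 0 j + t * c1 0 j + t ^+ 2 * c2 0 j + t ^+ 3 * c3 0 j.
have hL t : L t = 0.
  by have := congr1 (fun v : rV n => v 0 j) (H t); rewrite /= !(entryD, entryZ, entry0).
(* Lagrange interpolation at t = -1, 0, 1, 2 *)
have e0 : c0 0 j = L 0 by rewrite /L; ring.
have e1 : c1 0 j = L 1 - c0 0 j - c2 0 j - c3 0 j by rewrite /L; ring.
have e2 : 2%:R * c2 0 j = L 1 + L (-1) - 2%:R * L 0 by rewrite /L; ring.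
have e3 : 6%:R * c3 0 j = L 2%:R - 3%:R * L 1 + 3%:R * L 0 - L (-1) by rewrite /L; ring.
rewrite !hL !(mulr0, subr0, addr0) in e0 e1 e2 e3.
have z2 : c2 0 j = 0 by apply/eqP; move/eqP: e2; rewrite mulf_eq0 (negbTE n2).
have z3 : c3 0 j = 0 by apply/eqP; move/eqP: e3; rewrite mulf_eq0 (negbTE n6).
by split=> //; rewrite e1 e0 z2 z3 !subr0.
Qed.

End Preliminaries.

Section Isometries.
Variable K : fieldType.
Local Notation rV n := 'rV[K]_n.

Lemma isometric_iso_of n1 n2 (A1 : falg K n1) (A2 : falg K n2)
    (F : rV n1 -> rV n2) (G : rV n2 -> rV n1) :
  linear F -> cancel F G -> cancel G F ->
  (forall x y, F (amul A1 x y) = amul A2 (F x) (F y)) ->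
  (forall x y, aform A2 (F x) (F y) = aform A1 x y) -> isometric_iso A1 A2.
Proof.
move=> HF FG GF Hm Hb; exists (mulmxr (lin1_mx F)) => /=.
split; first by exists G => x /=; rewrite mul_rV_lin1_fun // ?FG ?GF.
by split=> x y /=; rewrite !mul_rV_lin1_fun.
Qed.

Lemma isometric_iso_refl n (A : falg K n) : isometric_iso A A.
Proof. exact: (@isometric_iso_of _ _ _ _ id id). Qed.

Lemma isometric_iso_trans n1 n2 n3 (A1 : falg K n1) (A2 : falg K n2) (A3 : falg K n3) :
  isometric_iso A1 A2 -> isometric_iso A2 A3 -> isometric_iso A1 A3.
Proof.
move=> [f [[g fg gf] [fm fb]]] [f' [[g' fg' gf'] [fm' fb']]].
apply: (@isometric_iso_of _ _ _ _ (f' \o f) (g \o g')) => /=.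
- by move=> a x y /=; rewrite !linearP.
- by move=> x /=; rewrite fg' fg.
- by move=> x /=; rewrite gf gf'.
- by move=> x y; rewrite fm fm'.
- by move=> x y; rewrite fb' fb.
Qed.

Lemma pE_jordan_iso n1 n2 (A1 : falg K n1) (A2 : falg K n2) :
  isometric_iso A1 A2 -> is_pE_jordan A2 -> is_pE_jordan A1.
Proof.
move=> [f [[g fg gf] [fm fb]]] [[[Hm1 Hm2] [Hc Hj]] [[Hb1 Hb2] [Hs [Hnd Hinv]]]].
have fi := can_inj fg.
split; split.
- by split=> a x y z; apply: fi; rewrite fm linearP ?Hm1 ?Hm2 -!fm linearP.
- by split=> x y; apply: fi; rewrite !fm; [rewrite Hc | rewrite Hj].
- by split=> a x y z; rewrite -!fb linearP ?Hb1 ?Hb2 -?fb.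
- split; first by move=> x y; rewrite -!fb Hs.
  split; last by move=> x y z; rewrite -!fb !fm Hinv.
  move=> x Hx; apply: fi; rewrite linear0; apply: Hnd => y.
  by rewrite -[y]gf fb Hx.
Qed.

Lemma nilpotent_iso n1 n2 (A1 : falg K n1) (A2 : falg K n2) :
  isometric_iso A1 A2 -> nilpotent_alg A2 -> nilpotent_alg A1.
Proof.
move=> [f [[g fg _] [fm _]]] [k [k0 Hk]]; exists k; split=> // x Hx.
apply: (can_inj fg); rewrite linear0; apply: Hk.
by elim: Hx => [y|i j y z _ IHy _ IHz]; rewrite ?fm; constructor.
Qed.

Lemma osum_iso n1 n2 n1' n2' (A1 : falg K n1) (A2 : falg K n2)
    (A1' : falg K n1') (A2' : falg K n2') :
  isometric_iso A1' A1 -> isometric_iso A2' A2 -> isometric_iso (osum A1' A2') (osum A1 A2).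
Proof.
move=> [f1 [[g1 fg1 gf1] [fm1 fb1]]] [f2 [[g2 fg2 gf2] [fm2 fb2]]].
apply: (@isometric_iso_of _ _ _ _ (fun u => row_mx (f1 (lsubmx u)) (f2 (rsubmx u)))
                                    (fun u => row_mx (g1 (lsubmx u)) (g2 (rsubmx u)))).
- by move=> a u v; rewrite !linearP scale_row_mx add_row_mx.
- by move=> u; rewrite row_mxKl row_mxKr fg1 fg2 hsubmxK.
- by move=> u; rewrite row_mxKl row_mxKr gf1 gf2 hsubmxK.
- by move=> u v /=; rewrite !row_mxKl !row_mxKr fm1 fm2.
- by move=> u v /=; rewrite !row_mxKl !row_mxKr fb1 fb2.
Qed.

End Isometries.

Section DextCoordinates.
Variables (K : fieldType) (n : nat).
Local Notation rV n := 'rV[K]_n.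
Implicit Types (u v : rV (1 + (n + 1))) (x : rV n).

Lemma coef_a_mk3 al x be : coef_a (mk3 al x be) = al.
Proof. by rewrite /coef_a /mk3 row_mxKl mxE eqxx mulr1n. Qed.

Lemma mid_mk3 al x be : mid (mk3 al x be) = x.
Proof. by rewrite /mid /mk3 row_mxKr row_mxKl. Qed.

Lemma coef_b_mk3 al x be : coef_b (mk3 al x be) = be.
Proof. by rewrite /coef_b /mk3 row_mxKr row_mxKr mxE eqxx mulr1n. Qed.

Lemma mk3K u : mk3 (coef_a u) (mid u) (coef_b u) = u.
Proof. by rewrite /mk3 /coef_a /mid /coef_b -!mx11_scalar !hsubmxK. Qed.

Lemma eq_coords u v :
  coef_a u = coef_a v -> mid u = mid v -> coef_b u = coef_b v -> u = v.
Proof. by move=> ha hm hb; rewrite -[u]mk3K -[v]mk3K ha hm hb. Qed.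

Lemma coef_a_scalar : scalar (@coef_a K n).
Proof. by move=> a u v; rewrite /coef_a !mxE. Qed.

Lemma coef_b_scalar : scalar (@coef_b K n).
Proof. by move=> a u v; rewrite /coef_b !mxE. Qed.

Lemma mid_linear : linear (@mid K n).
Proof. by move=> a u v; rewrite /mid !linearP. Qed.

Lemma mid0 : mid (0 : rV (1 + (n + 1))) = 0.
Proof. by rewrite /mid !linear0. Qed.

Lemma mk3_linear a al al' x x' be be' :
  mk3 (a * al + al') (a *: x + x') (a * be + be') = a *: mk3 al x be + mk3 al' x' be'.
Proof.
by apply: eq_coords;
  rewrite ?coef_a_scalar ?coef_b_scalar ?mid_linear ?coef_a_mk3 ?coef_b_mk3 ?mid_mk3.
Qed.

Lemma mk3_mid_linear a x x' : mk3 0 (a *: x + x') 0 = a *: mk3 0 x 0 + mk3 0 x' 0.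
Proof. by rewrite -mk3_linear mulr0 addr0. Qed.

Variables (A : falg K n) (D : 'M[K]_n) (x0 : rV n) (k : K).

Lemma dext_mul_mk3 al x be al' x' be' :
  amul (dext A D x0 k) (mk3 al x be) (mk3 al' x' be') =
  mk3 0 ((al * al') *: x0 + al *: (x' *m D) + al' *: (x *m D) + amul A x x')
        (al * al' * k + al * aform A x0 x' + al' * aform A x0 x + aform A (x *m D) x').
Proof. by rewrite /= !coef_a_mk3 !mid_mk3. Qed.

Lemma dext_form_mk3 al x be al' x' be' :
  aform (dext A D x0 k) (mk3 al x be) (mk3 al' x' be') = al * be' + be * al' + aform A x x'.
Proof. by rewrite /= !coef_a_mk3 !mid_mk3 !coef_b_mk3. Qed.

End DextCoordinates.

Lemma dext_iso (K : fieldType) n n' (A : falg K n) (A' : falg K n') D x0 k :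
  isometric_iso A' A -> exists D' x0', isometric_iso (dext A' D' x0' k) (dext A D x0 k).
Proof.
move=> [f [[g fg gf] [fm fb]]].
have g_lin : linear g by apply: can_linear fg gf => a x y; rewrite linearP.
have conjD_lin : linear (fun w => g (f w *m D)).
  by move=> a u v; rewrite linearP mulmxDl mulmxZl g_lin.
exists (lin1_mx (fun w => g (f w *m D))), (g x0).
apply: (@isometric_iso_of _ _ _ _ _ (fun u => mk3 (coef_a u) (f (mid u)) (coef_b u))
                                    (fun u => mk3 (coef_a u) (g (mid u)) (coef_b u))).
- by move=> a u v; rewrite coef_a_scalar coef_b_scalar mid_linear linearP mk3_linear.
- by move=> u; rewrite coef_a_mk3 mid_mk3 coef_b_mk3 fg mk3K.
- by move=> u; rewrite coef_a_mk3 mid_mk3 coef_b_mk3 gf mk3K.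
- move=> u v /=; rewrite !coef_a_mk3 !mid_mk3 !coef_b_mk3 !mul_rV_lin1_fun //.
  by rewrite !linearD !linearZ /= fm !gf -!fb !gf.
- by move=> u v; rewrite dext_form_mk3 /= fb.
Qed.

Section DextInverse.
Variables (K : fieldType) (n : nat) (A : falg K n) (D : 'M[K]_n) (x0 : 'rV[K]_n) (k : K).
Local Notation dA := (dext A D x0 k).

Lemma dext_nilpotent_inv : nilpotent_alg dA -> nilpotent_alg A.
Proof.
move=> [p [p0 Hp]]; exists p; split=> // x Hx.
suff [z [Hz _ <-]] : exists z, [/\ prod_deg dA p z, coef_a z = 0 & mid z = x].
  by rewrite (Hp _ Hz) mid0.
elim: Hx => [y|i j y1 y2 _ [z1 [H1 a1 m1]] _ [z2 [H2 a2 m2]]].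
  by exists (mk3 0 y 0); rewrite coef_a_mk3 mid_mk3; split=> //; constructor.
exists (amul dA z1 z2); split; first by constructor.
  by rewrite -[z1]mk3K -[z2]mk3K dext_mul_mk3 coef_a_mk3.
by rewrite -[z1]mk3K -[z2]mk3K dext_mul_mk3 mid_mk3 a1 a2 m1 m2 !mul0r !scale0r !add0r.
Qed.

Lemma dext_pE_jordan_inv : is_pE_jordan dA -> is_pE_jordan A /\ form_symmetric A D.
Proof.
move=> [[[Hm1 Hm2] [Hc Hj]] [[Hb1 Hb2] [Hs [Hnd Hinv]]]].
have hm x y : amul A x y = mid (amul dA (mk3 0 x 0) (mk3 0 y 0)).
  by rewrite dext_mul_mk3 mid_mk3 !mul0r !scale0r !add0r.
have hf x y : aform A x y = aform dA (mk3 0 x 0) (mk3 0 y 0).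
  by rewrite dext_form_mk3 !mul0r !add0r.
have bilA : bilinear_mul (amul A).
  by split=> a x y z; rewrite !hm mk3_mid_linear ?Hm1 ?Hm2 mid_linear.
have bfA : bilinear_form (aform A).
  by split=> a x y z; rewrite !hf mk3_mid_linear ?Hb1 ?Hb2.
split; last first.
  (* invariance of the form on the triple (x, y, a) *)
  move=> x y; have := Hinv (mk3 0 x 0) (mk3 0 y 0) (mk3 1 0 0).
  rewrite !dext_mul_mk3 !dext_form_mk3 (bmul0r bilA) !(bform0r bfA) mul0mx.
  by rewrite ?mul0r ?mulr0 ?scale0r ?add0r ?addr0 ?mulr1 ?mul1r ?scale1r.
split; split=> //.
- split; first by move=> x y; rewrite !hm Hc.
  move=> x y; have := congr1 (@mid K n) (Hj (mk3 0 x 0) (mk3 0 y 0)).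
  by rewrite !dext_mul_mk3 !mid_mk3 !mul0r !scale0r !add0r.
- split; first by move=> x y; rewrite !hf Hs.
  split.
    move=> x Hx; suff /(congr1 (@mid K n)) : mk3 0 x 0 = 0 by rewrite mid_mk3 mid0.
    apply: Hnd => w; rewrite -[w]mk3K dext_form_mk3 !mul0r !add0r.
    by rewrite Hx.
  move=> x y z; have := Hinv (mk3 0 x 0) (mk3 0 y 0) (mk3 0 z 0).
  by rewrite !dext_mul_mk3 !dext_form_mk3 !mul0r !scale0r !add0r !mulr0 !add0r.
Qed.

End DextInverse.

(* [entrywise_from l h] proves an equation [u = v] of row vectors coordinatewise, from
   [h : w = w'] and the scalar identity [u_j - v_j = l * (w_j - w'_j)] left to [ring]. *)
Ltac entrywise_from l h :=
  let j := fresh "j" in let hj := fresh "hj" in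
  apply/rowP => j; move: (congr1 (fun v : 'M_(1, _) => v 0 j) h);
  rewrite ?(entryD, entryZ, entryN, entry0) => hj; rewrite ?(entryD, entryZ, entryN, entry0);
  apply: (eq_from_scaled_eq (l := l) hj).

Section DextAdmissible.
Variables (K : fieldType) (n : nat) (A : falg K n) (D : 'M[K]_n) (x0 : 'rV[K]_n) (k : K).
Hypothesis Hch : [pchar K] =i pred0.
Hypothesis bilA : bilinear_mul (amul A).
Local Notation m := (amul A).
Local Notation dA := (dext A D x0 k).
Hypothesis dext_jordan :
  forall x y, amul dA x (amul dA y (amul dA x x)) = amul dA (amul dA x y) (amul dA x x).

(* the coefficients of t^0, ..., t^3 in the Jordan identity for (t a + x, y) *)
Lemma dext_jordan_coefs x y :
  [/\ m x (m y (m x x)) - m (m x y) (m x x) = 0,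
      m y (m x x) *m D + 2%:R *: m x (m y (x *m D)) - m (y *m D) (m x x)
        - 2%:R *: m (m x y) (x *m D) = 0,
      2%:R *: (m y (x *m D) *m D) + m x (m y x0) - 2%:R *: m (y *m D) (x *m D)
        - m (m x y) x0 = 0 &
      m y x0 *m D - m (y *m D) x0 = 0].
Proof.
apply: cubic_coefs_eq0 => // t.
have := congr1 (@mid K n) (dext_jordan (mk3 t x 0) (mk3 0 y 0)).
rewrite !dext_mul_mk3 !mid_mk3
  ?(bmulDr bilA, bmulDl bilA, bmulZr bilA, bmulZl bilA, mulmxDl, mulmxZl) => h.
by entrywise_from (1 : K) h; ring.
Qed.

(* the coefficients of t^0, ..., t^3 in the Jordan identity for (t a + x, a) *)
Lemma dext_jordan_coefs_a x :
  [/\ m x (m x x *m D) - m (x *m D) (m x x) = 0,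
      m x x *m D *m D + 2%:R *: m x (x *m D *m D) - 2%:R *: m (x *m D) (x *m D)
        - m x0 (m x x) = 0,
      2%:R *: (x *m D *m D *m D) + m x (x0 *m D) - m (x *m D) x0
        - 2%:R *: m x0 (x *m D) = 0 &
      x0 *m D *m D - m x0 x0 = 0].
Proof.
apply: cubic_coefs_eq0 => // t.
have := congr1 (@mid K n) (dext_jordan (mk3 t x 0) (mk3 1 0 0)).
rewrite !dext_mul_mk3 !mid_mk3 ?(bmulDr bilA, bmulDl bilA, bmulZr bilA, bmulZl bilA,
  mulmxDl, mulmxZl, bmul0r bilA, bmul0l bilA, mul0mx) => h.
by entrywise_from (1 : K) h; ring.
Qed.

Hypothesis comA : forall x y, m x y = m y x.

Lemma dext_admissible : admissible A D x0.
Proof.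
have n2 : (2%:R : K) != 0 by rewrite ((pcharf0P K).1 Hch 2).
split; [|split; [|split; [|split; [|split; [|split]]]]].
- move=> x y; have [_ h _ _] := dext_jordan_coefs x y.
  rewrite (comA (m x x) y) (comA (m x x) (y *m D)) (comA (x *m D) (m x y)) (comA (x *m D) y).
  by entrywise_from (1 : K) h; ring.
- move=> x y; have [_ _ h _] := dext_jordan_coefs x y.
  rewrite /assoc (comA (x *m D) (y *m D)) (comA (x *m D) y) (comA (m x0 y) x) (comA x0 y).
  rewrite (comA x0 (m y x)) (comA y x).
  by entrywise_from (- 2%:R^-1 : K) h; field.
- move=> x; have [_ _ _ h] := dext_jordan_coefs x x.
  rewrite (comA x0 x) (comA x0 (x *m D)).
  by entrywise_from (1 : K) h; ring.
- move=> x; have [h _ _ _] := dext_jordan_coefs_a x.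
  rewrite (comA (m x x) (x *m D)).
  by entrywise_from (1 : K) h; ring.
- by move=> x; have [_ h _ _] := dext_jordan_coefs_a x; entrywise_from (1 : K) h; ring.
- move=> x; have [_ _ h _] := dext_jordan_coefs_a x.
  rewrite (comA (x *m D) x0) in h.
  by entrywise_from (2%:R^-1 : K) h; field.
- by have [_ _ _ h] := dext_jordan_coefs_a x0; entrywise_from (1 : K) h; ring.
Qed.

End DextAdmissible.

Lemma obtained_dext (K : fieldType) (Hch : [pchar K] =i pred0) n (A : falg K n) D x0 k :
  is_pE_jordan (dext A D x0 k) -> obtained A -> obtained (dext A D x0 k).
Proof.
move=> Hd obA; have [[[bilA [comA _]] _] symD] := dext_pE_jordan_inv Hd.
have [[_ [_ jordan_dext]] _] := Hd.
exact: obt_dext obA (dext_admissible Hch bilA jordan_dext comA) symD.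
Qed.

Section OrthogonalSum.
Variables (K : fieldType) (n1 n2 : nat) (A1 : falg K n1) (A2 : falg K n2).
Local Notation rV n := 'rV[K]_n.
Local Notation A := (osum A1 A2).

Lemma osum_nilpotent_r : nilpotent_alg A -> nilpotent_alg A2.
Proof.
move=> [p [p0 Hp]]; exists p; split=> // x Hx.
suff [z [Hz <-]] : exists z, prod_deg A p z /\ rsubmx z = x by rewrite (Hp _ Hz) linear0.
elim: Hx => [y|i j y1 y2 _ [z1 [H1 m1]] _ [z2 [H2 m2]]].
  by exists (row_mx 0 y); rewrite row_mxKr; split=> //; constructor.
exists (amul A z1 z2); split; first by constructor.
by rewrite /= row_mxKr m1 m2.
Qed.

Lemma osum_pE_jordan_r : aform A1 0 0 = 0 -> is_pE_jordan A -> is_pE_jordan A2.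
Proof.
move=> B1_00 [[bil [Hc Hj]] [bf [Hs [Hnd Hinv]]]].
have embed_lin a (x y : rV n2) :
  row_mx (0 : rV n1) (a *: x + y) = a *: row_mx 0 x + row_mx 0 y.
  by rewrite scale_row_mx add_row_mx scaler0 addr0.
have hm x y : amul A2 x y = rsubmx (amul A (row_mx 0 x) (row_mx 0 y)).
  by rewrite /= !row_mxKr.
have hf x y : aform A2 x y = aform A (row_mx 0 x) (row_mx 0 y).
  by rewrite /= !row_mxKr !row_mxKl B1_00 add0r.
have B2_00 : aform A2 0 0 = 0 by have := bform0l bf 0; rewrite /= !linear0 B1_00 add0r.
have B1_0 z : aform A1 0 z = 0.
  by have := bform0l bf (row_mx z 0); rewrite /= !linear0 row_mxKl row_mxKr B2_00 addr0.
have M1_0 z : amul A1 0 z = 0.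
  by have := congr1 lsubmx (bmul0l bil (row_mx z 0)); rewrite /= !row_mxKl !linear0.
have hm' x y : row_mx 0 (amul A2 x y) = amul A (row_mx 0 x) (row_mx 0 y).
  by rewrite /= !row_mxKl !row_mxKr M1_0.
split; split.
- by split=> a x y z; rewrite !hm embed_lin ?(proj1 bil) ?(proj2 bil) linearP.
- split; first by move=> x y; rewrite !hm Hc.
  move=> x y; have := congr1 rsubmx (Hj (row_mx 0 x) (row_mx 0 y)).
  by rewrite /= !row_mxKl !row_mxKr.
- by split=> a x y z; rewrite !hf embed_lin ?(proj1 bf) ?(proj2 bf).
- split; first by move=> x y; rewrite !hf Hs.
  split; last by move=> x y z; rewrite !hf !hm' Hinv.
  move=> x Hx; suff /(congr1 rsubmx) : row_mx (0 : rV n1) x = 0 by rewrite row_mxKr linear0.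
  by apply: Hnd => w; rewrite /= row_mxKl row_mxKr B1_0 Hx add0r.
Qed.

End OrthogonalSum.

Definition line_alg (K : fieldType) (b : K) : falg K 1 :=
  FAlg (fun _ _ => 0) (fun x y => x 0 0 * y 0 0 * b).

Lemma line_alg_in_E (K : fieldType) (b : K) : in_E (line_alg b).
Proof. by right. Qed.

Lemma line_alg_pE_jordan (K : fieldType) (b : K) : b != 0 -> is_pE_jordan (line_alg b).
Proof.
move=> b0; split; split.
- by split=> a x y z /=; rewrite scaler0 addr0.
- by [].
- by split=> a x y z /=; rewrite !mxE; ring.
- split; first by move=> x y /=; ring.
  split; last by move=> x y z /=; rewrite !mxE; ring.
  move=> x Hx; have /eqP := Hx (const_mx 1); rewrite /= mxE mulr1 mulf_eq0 (negbTE b0) orbF.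
  by move=> /eqP x0; apply/rowP=> i; rewrite ord1 x0 mxE.
Qed.

Section KernelBasis.
Variables (K : fieldType) (n p : nat) (l : 'rV[K]_n -> 'rV[K]_p).
Hypothesis l_lin : linear l.
Local Notation L := (lin1_mx l).

Definition ker_dim := \rank (kermx L).
Definition ker_emb (w : 'rV[K]_ker_dim) : 'rV[K]_n := w *m row_base (kermx L).
Definition ker_coord (z : 'rV[K]_n) : 'rV[K]_ker_dim := z *m pinvmx (row_base (kermx L)).

Lemma ker_emb_linear : linear ker_emb.
Proof. by move=> a u v; rewrite /ker_emb mulmxDl mulmxZl. Qed.

Lemma ker_coord_linear : linear ker_coord.
Proof. by move=> a u v; rewrite /ker_coord mulmxDl mulmxZl. Qed.

Lemma ker_embP w : l (ker_emb w) = 0.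
Proof.
rewrite -mul_rV_lin1_fun // /ker_emb -mulmxA.
have: (row_base (kermx L) <= kermx L)%MS by rewrite eq_row_base.
by rewrite sub_kermx => /eqP ->; rewrite mulmx0.
Qed.

Lemma ker_embK z : l z = 0 -> ker_emb (ker_coord z) = z.
Proof.
move=> lz; rewrite /ker_emb /ker_coord mulmxKpV //.
by rewrite eq_row_base sub_kermx mul_rV_lin1_fun // lz.
Qed.

Lemma ker_coordK w : ker_coord (ker_emb w) = w.
Proof.
apply: (row_free_inj (row_base_free (kermx L))).
exact: (ker_embK (ker_embP w)).
Qed.

Lemma ker_dim_lt z : l z != 0 -> (ker_dim < n)%N.
Proof.
move=> lz; have rkL : (0 < \rank L)%N.
  rewrite lt0n mxrank_eq0; apply: contraNneq lz => L0.
  by rewrite -mul_rV_lin1_fun // L0 mulmx0.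
by rewrite /ker_dim mxrank_ker ltn_subrL rkL (leq_trans rkL (rank_leq_row L)).
Qed.

End KernelBasis.

Arguments ker_emb {K n p} l w.
Arguments ker_coord {K n p} l z.

Definition induced_alg (K : fieldType) n r (J : falg K n) (e : 'rV[K]_r -> 'rV[K]_n)
    (p : 'rV[K]_n -> 'rV[K]_r) : falg K r :=
  FAlg (fun w w' => p (amul J (e w) (e w'))) (fun w w' => aform J (e w) (e w')).

Lemma nilpotent_annihilator (K : fieldType) n (J : falg K n) :
  nilpotent_alg J -> (0 < n)%N -> exists c : 'rV[K]_n, c != 0 /\ forall x, amul J c x = 0.
Proof.
move=> [p [p0 Hp]] n0; apply: NNPP => no_ann.
(* without a nonzero annihilator, every nonzero product can be extended by one factor *)
suff [x [Hx x0]] : exists x, prod_deg J p x /\ x != 0 by rewrite (Hp x Hx) eqxx in x0.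
rewrite -(prednK p0); elim: p.-1 => [|i [x [Hx x0]]].
  exists (const_mx 1); split; first by constructor.
  by apply/eqP => /rowP /(_ (Ordinal n0)); rewrite !mxE; apply/eqP; exact: oner_neq0.
have /not_all_ex_not [y xy0] : ~ forall y, amul J x y = 0 by move=> Hy; apply: no_ann; exists x.
exists (amul J x y); split; last exact/eqP.
by rewrite -[i.+2]addn1; apply: prod_degM Hx (prod_deg1 _ _).
Qed.

Section AnnihilatorSplitting.
Variables (K : fieldType) (n : nat) (J : falg K n) (c : 'rV[K]_n).
Hypothesis HJ : is_pE_jordan J.
Hypothesis c_ann : forall x, amul J c x = 0.
Local Notation rV n := 'rV[K]_n.
Local Notation m := (amul J).
Local Notation B := (aform J).

Let bil : bilinear_mul m := proj1 (proj1 HJ).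
Let mC : forall x y, m x y = m y x := proj1 (proj2 (proj1 HJ)).
Let bf : bilinear_form B := proj1 (proj2 HJ).
Let BC : forall x y, B x y = B y x := proj1 (proj2 (proj2 HJ)).
Let B_nondeg : forall x, (forall y, B x y = 0) -> x = 0 := proj1 (proj2 (proj2 (proj2 HJ))).
Let Binv : forall x y z, B (m x y) z = B x (m y z) := proj2 (proj2 (proj2 (proj2 HJ))).

Let mul_ann_r x : m x c = 0. Proof. by rewrite mC c_ann. Qed.
Let form_mul_ann x y : B (m x y) c = 0. Proof. by rewrite Binv mul_ann_r bform0r. Qed.

Section Anisotropic.
Hypothesis Bcc0 : B c c != 0.

Let l z : rV 1 := const_mx (B z c).
Let l_lin : linear l. Proof. by move=> a x y; apply/rowP=> i; rewrite !mxE (proj1 bf). Qed.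
Let g := ker_emb l.
Let h := ker_coord l.
Let g_lin : linear g := @ker_emb_linear _ _ _ l.
Let pi z := z - (B z c / B c c) *: c.

Let Bgc w : B (g w) c = 0. Proof. by have /rowP/(_ 0) := ker_embP l_lin w; rewrite !mxE. Qed.
Let Bcg w : B c (g w) = 0. Proof. by rewrite BC. Qed.
Let gh z : B z c = 0 -> g (h z) = z.
Proof. by move=> Bzc; apply: ker_embK => //; apply/rowP=> i; rewrite !mxE. Qed.
Let hg w : h (g w) = w. Proof. exact: ker_coordK. Qed.
Let Bpi z : B (pi z) c = 0.
Proof. by rewrite /pi (bformDl bf) (bformNl bf) (bformZl bf) divfK // subrr. Qed.

Lemma anisotropic_annihilator_split :
  exists r (C : falg K r), (r < n)%N /\ isometric_iso (osum (line_alg (B c c)) C) J.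
Proof.
exists (ker_dim l), (induced_alg J g h); split.
  by apply: (ker_dim_lt l_lin (z := c)); apply/eqP => /rowP/(_ 0); rewrite !mxE; apply/eqP.
apply: (@isometric_iso_of _ _ _ _ _ (fun u => lsubmx u 0 0 *: c + g (rsubmx u))
                                    (fun z => row_mx (const_mx (B z c / B c c)) (h (pi z)))).
- move=> a u v; rewrite [lsubmx _]linearP [rsubmx _]linearP g_lin entryD entryZ.
  by rewrite scalerDl scalerDr scalerA addrACA.
- move=> u; have BFc : B (lsubmx u 0 0 *: c + g (rsubmx u)) c = lsubmx u 0 0 * B c c.
    by rewrite (bformDl bf) (bformZl bf) Bgc addr0.
  rewrite /pi BFc mulfK // addrAC subrr add0r hg.
  by rewrite -[RHS]hsubmxK; congr row_mx; apply/rowP=> i; rewrite ord1 !mxE.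
- by move=> z; rewrite row_mxKl row_mxKr mxE (gh (Bpi z)) /pi addrC subrK.
- move=> u v /=; rewrite row_mxKl row_mxKr mxE scale0r add0r gh //.
  rewrite (bmulDl bil) !(bmulDr bil) !(bmulZl bil) !(bmulZr bil) !c_ann !mul_ann_r.
  by rewrite !scaler0 !add0r.
- move=> u v /=.
  rewrite !(bformDl bf, bformDr bf, bformZl bf, bformZr bf) !Bgc !Bcg.
  by ring.
Qed.

End Anisotropic.

Lemma hyperbolic_partner : [pchar K] =i pred0 -> c != 0 -> B c c = 0 ->
  exists a, B c a = 1 /\ B a a = 0.
Proof.
move=> Hch c0 Bcc.
have n2 : (2%:R : K) != 0 by rewrite ((pcharf0P K).1 Hch 2).
have [y Bcy] : exists y, B c y != 0.
  apply: NNPP => H; move/eqP: c0; apply; apply: B_nondeg => y.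
  by apply/eqP; apply: contraT => Bcy; case: H; exists y.
pose a1 := (B c y)^-1 *: y.
have Bca1 : B c a1 = 1 by rewrite /a1 (bformZr bf) mulVf.
exists (a1 - (B a1 a1 / 2%:R) *: c); split.
  by rewrite (bformDr bf) (bformNr bf) (bformZr bf) Bcc mulr0 subr0.
rewrite !(bformDl bf, bformDr bf, bformNl bf, bformNr bf, bformZl bf, bformZr bf).
by rewrite Bcc (BC y c); field; rewrite ?Bcy ?n2.
Qed.

Section Isotropic.
Variable a : rV n.
Hypotheses (Bcc : B c c = 0) (Bca : B c a = 1) (Baa : B a a = 0).

Let Bac : B a c = 1. Proof. by rewrite BC. Qed.
Let l z : rV (1 + 1) := row_mx (const_mx (B z a)) (const_mx (B z c)).
Let l_lin : linear l.
Proof.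
move=> s x z; rewrite /l scale_row_mx add_row_mx.
by congr row_mx; apply/rowP=> i; rewrite !mxE (proj1 bf).
Qed.
Let g := ker_emb l.
Let h := ker_coord l.
Let g_lin : linear g := @ker_emb_linear _ _ _ l.
Let h_lin : linear h := @ker_coord_linear _ _ _ l.
Let pi z := z - B z c *: a - B z a *: c.

Let l_eq0 z : l z = 0 -> B z a = 0 /\ B z c = 0.
Proof.
rewrite /l -[0]row_mx0 => /eq_row_mx [/rowP/(_ 0) za /rowP/(_ 0) zc].
by move: za zc; rewrite !mxE.
Qed.
Let Bga w : B (g w) a = 0. Proof. by have [] := l_eq0 (ker_embP l_lin w). Qed.
Let Bgc w : B (g w) c = 0. Proof. by have [] := l_eq0 (ker_embP l_lin w). Qed.
Let Bag w : B a (g w) = 0. Proof. by rewrite BC. Qed.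
Let Bcg w : B c (g w) = 0. Proof. by rewrite BC. Qed.
Let hg w : h (g w) = w. Proof. exact: ker_coordK. Qed.

Let pi_lin : linear pi.
Proof.
move=> s x z; rewrite /pi !(bformDl bf, bformZl bf).
by apply/rowP=> j; rewrite !(entryD, entryZ, entryN); ring.
Qed.

Let g_pi z : g (h (pi z)) = pi z.
Proof.
apply: ker_embK => //.
have Bpa : B (pi z) a = 0 by rewrite /pi !(bformDl bf, bformNl bf, bformZl bf) Baa Bca; ring.
have Bpc : B (pi z) c = 0 by rewrite /pi !(bformDl bf, bformNl bf, bformZl bf) Bac Bcc; ring.
by rewrite /l Bpa Bpc row_mx0.
Qed.

Let pi_mul x y : pi (m x y) = m x y - B (m x y) a *: c.
Proof. by rewrite /pi form_mul_ann scale0r subr0. Qed.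

Let Df w := h (pi (m a (g w))).
Let Df_lin : linear Df.
Proof.
have ma_lin : linear (m a) by move=> s x z; rewrite (bmulDr bil) (bmulZr bil).
by move=> s x z; rewrite /Df g_lin ma_lin pi_lin h_lin.
Qed.
Let D := lin1_mx Df.
Let x0 := h (pi (m a a)).
Let k := B (m a a) a.

Let g_x0 : g x0 = m a a - k *: c. Proof. by rewrite /x0 g_pi pi_mul. Qed.
Let gD w : g (w *m D) = m a (g w) - B (m a a) (g w) *: c.
Proof. by rewrite (mul_rV_lin1_fun Df_lin) /Df g_pi pi_mul mC Binv BC. Qed.
Let B_x0 w : B (g x0) (g w) = B (m a a) (g w).
Proof. by rewrite g_x0 (bformDl bf) (bformNl bf) (bformZl bf) Bcg mulr0 subr0. Qed.
Let B_D w w' : B (g (w *m D)) (g w') = B (m a (g w)) (g w').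
Proof. by rewrite gD (bformDl bf) (bformNl bf) (bformZl bf) Bcg mulr0 subr0. Qed.
Let B_mul w w' : B (m (g w) (g w')) a = B (m a (g w)) (g w').
Proof. by rewrite [RHS]Binv BC. Qed.

Lemma hyperbolic_pair_dext :
  exists r (W : falg K r) D x0 k, (r < n)%N /\ isometric_iso (dext W D x0 k) J.
Proof.
exists (ker_dim l), (induced_alg J g (h \o pi)), D, x0, k; split.
  apply: (ker_dim_lt l_lin (z := c)); apply/eqP => /l_eq0 [+ _].
  by rewrite Bca => /eqP; rewrite oner_eq0.
apply: (@isometric_iso_of _ _ _ _ _ (fun u => coef_a u *: a + g (mid u) + coef_b u *: c)
                                    (fun z => mk3 (B z c) (h (pi z)) (B z a))).
- move=> s u v; rewrite coef_a_scalar coef_b_scalar mid_linear g_lin.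
  by apply/rowP=> j; rewrite !(entryD, entryZ); ring.
- move=> u; set z := _ + _.
  have Bzc : B z c = coef_a u by rewrite !(bformDl bf, bformZl bf) Bac Bgc Bcc; ring.
  have Bza : B z a = coef_b u by rewrite !(bformDl bf, bformZl bf) Baa Bga Bca; ring.
  have pi_z : pi z = g (mid u).
    by rewrite /pi Bzc Bza; apply/rowP=> j; rewrite !(entryD, entryZ, entryN); ring.
  by rewrite Bzc Bza pi_z hg mk3K.
- move=> z /=; rewrite coef_a_mk3 mid_mk3 coef_b_mk3 g_pi /pi.
  by apply/rowP=> j; rewrite !(entryD, entryZ, entryN); ring.
- move=> u v /=; rewrite !coef_a_mk3 !mid_mk3 !coef_b_mk3.
  rewrite !B_x0 B_D !(linear_funD g_lin) !(linear_funZ g_lin) g_x0 !gD g_pi pi_mul B_mul.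
  rewrite !(bmulDl bil) !(bmulDr bil) !(bmulZl bil) !(bmulZr bil) !c_ann !mul_ann_r.
  rewrite (mC (g (mid u)) a).
  by apply/rowP=> j; rewrite !(entryD, entryZ, entryN, entry0); ring.
- move=> u v /=.
  rewrite !(bformDl bf, bformDr bf, bformZl bf, bformZr bf) Baa Bac Bca Bcc.
  by rewrite !Bga !Bgc !Bag !Bcg; ring.
Qed.

End Isotropic.

End AnnihilatorSplitting.

Lemma obtained_of_nilpotent (K : fieldType) (Hch : [pchar K] =i pred0) n (J : falg K n) :
  is_pE_jordan J -> nilpotent_alg J ->
  exists m (J' : falg K m), obtained J' /\ isometric_iso J' J.
Proof.
elim/ltn_ind: n J => n IH J HJ Hn.
have [n0|n_gt0] := posnP n.
  by exists n, J; split; [apply: obt_base => //; left | exact: isometric_iso_refl].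
have [c [c0 c_ann]] := nilpotent_annihilator Hn n_gt0.
have [Bcc|Bcc] := eqVneq (aform J c c) 0.
  have [a [Bca Baa]] := hyperbolic_partner HJ Hch c0 Bcc.
  have [r [W [D [x0 [k [rn isoW]]]]]] := hyperbolic_pair_dext HJ c_ann Bcc Bca Baa.
  have [HW _] := dext_pE_jordan_inv (pE_jordan_iso isoW HJ).
  have nilW := dext_nilpotent_inv (nilpotent_iso isoW Hn).
  have [m [W' [obW' isoW']]] := IH r rn W HW nilW.
  have [D' [x0' isoD]] := dext_iso D x0 k isoW'.
  have isoJ := isometric_iso_trans isoD isoW.
  exists (1 + (m + 1))%N, (dext W' D' x0' k); split => //.
  apply: (obtained_dext Hch) obW'.
  exact: pE_jordan_iso isoJ HJ.
have [r [C [rn isoC]]] := anisotropic_annihilator_split HJ c_ann Bcc.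
have H00 : aform (line_alg (aform J c c)) 0 0 = 0 by rewrite /= !mxE !mul0r.
have HC := osum_pE_jordan_r H00 (pE_jordan_iso isoC HJ).
have nilC := osum_nilpotent_r (nilpotent_iso isoC Hn).
have [m [C' [obC' isoC']]] := IH r rn C HC nilC.
exists (1 + m)%N, (osum (line_alg (aform J c c)) C'); split.
  by apply: obt_osum obC'; apply: obt_base; [exact: line_alg_in_E | exact: line_alg_pE_jordan].
exact: isometric_iso_trans (osum_iso (isometric_iso_refl _) isoC') isoC.
Qed.

Unset Implicit Arguments.

Theorem mainTheorem7 (K : fieldType) (Hchar : [pchar K] =i pred0)
  (n : nat) (J : falg K n) :
  is_pE_jordan J -> nilpotent_alg J -> ~ in_E J ->
  exists (m : nat) (J' : falg K m), obtained J' /\ isometric_iso J' J.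
Proof. by move=> HJ Hn _; exact: obtained_of_nilpotent. Qed.
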